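(* Let $\rho$ be a normal ruling of a front of a Legendrian link $\Lambda$, let $o$ be an orientation of $\Lambda$ and $o^\rho$ an orientation of $\Lambda^\rho$. Then the quantity \[ e_2(\rho)\equiv s_-(\rho)+f_+(\rho,o,o^\rho)-f_-(\rho,o,o^\rho) \pmod 2 \] does not depend on the choices of $o$ and $o^\rho$.
   Context: Normal ruling: fix a front diagram of $\Lambda$ whose crossings and cusps have distinct $x$-coordinates. A normal ruling $\rho$ is a set of crossings (switches) such that, letting $\Lambda^\rho$ be the front obtained by resolving each switch into two horizontal non-crossing segments: (i) each component of $\Lambda^\rho$ is planar isotopic to the standard front of the maximal-$tb$ Legendrian unknot; (ii) exactly two components of $\Lambda^\rho$ are incident to each switch; (iii) in a small vertical strip around each switch, the two incident ruling disks are either nested or disjoint. $s_-(\rho)$ is the number of switches that are negative crossings (w.r.t. $o$). A crossing of $\Lambda^\rho$ is flipped if its sign computed from $o$ differs from its sign computed from $o^\rho$; $f_+(\rho,o,o^\rho)$ (resp. $f_-$) is the number of flipped crossings of $\Lambda^\rho$ that are positive (resp. negative) with respect to $o^\rho$. *)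

From mathcomp Require Import all_boot all_order all_algebra.
Set Implicit Arguments. Unset Strict Implicit. Unset Printing Implicit Defensive.

(* A front whose crossings and cusps have distinct x-coordinates is encoded,
   up to planar isotopy, as the left-to-right list of its elementary events.
   Between consecutive events (at "slice" j, j = 0..size F) the front meets a
   vertical line in n_j points ("strands"), numbered 0,1,... from bottom to top.
   - Cross k : strands k and k+1 cross;
   - LCusp k : a left cusp creates two new strands at positions k, k+1
               (old strands at positions >= k move up by 2);
   - RCusp k : strands k and k+1 are joined by a right cusp
               (old strands above move down by 2).
   Event j lies between slice j and slice j+1. *)
Inductive event := Cross of nat | LCusp of nat | RCusp of nat.

Definition front := seq event.

Definition step (n : nat) (e : event) : nat :=
  match e with Cross _ => n | LCusp _ => n.+2 | RCusp _ => n.-2 end.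

Definition nstr (F : front) (j : nat) : nat := foldl step 0 (take j F).

Definition ev (F : front) (j : nat) : event := nth (Cross 0) F j.

Definition valid_event (n : nat) (e : event) : bool :=
  match e with
  | Cross k => k.+1 < n
  | LCusp k => k <= n
  | RCusp k => k.+1 < n
  end.

Definition valid_front (F : front) : Prop :=
  (forall j, j < size F -> valid_event (nstr F j) (ev F j)) /\
  nstr F (size F) = 0.

Definition is_crossing (F : front) (j : nat) : bool :=
  (j < size F) && (if ev F j is Cross _ then true else false).

Definition swap (k p : nat) : nat :=
  if p == k then k.+1 else if p == k.+1 then k else p.
Definition shup (k p : nat) : nat := if p < k then p else p.+2.
Definition shdn (k p : nat) : nat := if p < k then p else p - 2.

(* An orientation is recorded as the direction of every strand
   at every slice: o j p = true iff the strand at position p of slice j points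
   to the right (increasing x).  Directions are carried along strands, and the
   two branches at a cusp have opposite directions.  [sw] = true means that the
   crossing has been resolved (switch): the two strands then continue
   horizontally at the same positions. *)
Definition orient_step (n : nat) (e : event) (sw : bool) (a b : nat -> bool)
  : Prop :=
  match e with
  | Cross k =>
      if sw then forall p, p < n -> b p = a p
      else forall p, p < n -> b (swap k p) = a p
  | LCusp k => b k != b k.+1 /\ forall p, p < n -> b (shup k p) = a p
  | RCusp k => a k != a k.+1 /\
      forall p, p < n -> p != k -> p != k.+1 -> b (shdn k p) = a p
  end.

(* orientation of the front Lambda^rho obtained from F by resolving every
   crossing whose index is in S into two horizontal non-crossing segments *)
Definition is_orientation_res (F : front) (S : seq nat) (o : nat -> nat -> bool)
  : Prop :=
  forall j, j < size F -> orient_step (nstr F j) (ev F j) (j \in S) (o j) (o j.+1).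

Definition is_orientation (F : front) (o : nat -> nat -> bool) : Prop :=
  is_orientation_res F [::] o.

(* Following the standard combinatorial description, the
   components of Lambda^rho (eyes) are recorded by a pairing of the strands at
   each slice: s p = the position of the other boundary strand of the ruling
   disk containing strand p. *)
Definition pairing (n : nat) (s : nat -> nat) : Prop :=
  forall p, p < n -> [/\ s p < n, s p != p & s (s p) = p].

(* at a switch at strands k, k+1 with partners a = s k, b = s (k+1), the two
   ruling disks are disjoint or nested *)
Definition normal_switch (k a b : nat) : bool :=
  [|| (a < k) && (k.+1 < b), (b < a) && (a < k) | (k.+1 < b) && (b < a)].

Definition ruling_step (n : nat) (e : event) (sw : bool) (s t : nat -> nat)
  : Prop :=
  match e with
  | Cross k => s k != k.+1 /\
      (if sw then normal_switch k (s k) (s k.+1) /\ forall p, p < n -> t p = s p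
       else forall p, p < n -> t (swap k p) = swap k (s p))
  | LCusp k => t k = k.+1 /\ forall p, p < n -> t (shup k p) = shup k (s p)
  | RCusp k => s k = k.+1 /\
      forall p, p < n -> p != k -> p != k.+1 -> t (shdn k p) = shdn k (s p)
  end.

Definition normal_ruling (F : front) (S : seq nat) : Prop :=
  (forall j, j \in S -> is_crossing F j) /\
  exists sigma : nat -> nat -> nat,
    (forall j, j <= size F -> pairing (nstr F j) (sigma j)) /\
    (forall j, j < size F ->
       ruling_step (nstr F j) (ev F j) (j \in S) (sigma j) (sigma j.+1)).

(* Sign of a crossing in a front: positive iff both strands point the same
   way in the x-direction. *)
Definition pos_at (o : nat -> nat -> bool) (j k : nat) : bool := o j k == o j k.+1.

Definition s_minus (F : front) (S : seq nat) (o : nat -> nat -> bool) : nat :=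
  count (fun j => (j \in S) &&
           (if ev F j is Cross k then ~~ pos_at o j k else false))
        (iota 0 (size F)).

Definition f_count (b : bool) (F : front) (S : seq nat) (o orho : nat -> nat -> bool)
  : nat :=
  count (fun j => (j \notin S) &&
           (if ev F j is Cross k then
              (pos_at o j k != pos_at orho j k) && (pos_at orho j k == b)
            else false))
        (iota 0 (size F)).

Definition f_plus := f_count true.
Definition f_minus := f_count false.

Definition e2 (F : front) (S : seq nat) (o orho : nat -> nat -> bool) : int :=
  (((s_minus F S o)%:Z + (f_plus F S o orho)%:Z - (f_minus F S o orho)%:Z) %% 2)%Z.

(* Compare two orientations of the same front slice by slice through the word
   of strands on which they disagree.  The parity of the number of inversions
   of this word (a disagreeing strand below an agreeing one) is unchanged by a
   cusp, which inserts or deletes two equal adjacent letters, and by a resolved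
   crossing; a genuine crossing swaps two adjacent letters, so it changes the
   parity exactly when its sign differs for the two orientations.  As the word
   is empty at both ends, such crossings are even in number, for Lambda and for
   Lambda^rho alike.  Modulo 2, e_2 counts the switches that are negative for o
   plus the other crossings whose signs for o and o^rho differ, and replacing
   (o, o^rho) by another pair changes this by exactly those two even counts. *)

From mathcomp Require Import all_boot all_order all_algebra zify.
Set Implicit Arguments. Unset Strict Implicit. Unset Printing Implicit Defensive.

Lemma swapK k : involutive (swap k).
Proof.
move=> p; rewrite /swap.
case: (eqVneq p k) => [->|pk]; rewrite ?eqxx; first by case: ifP => // /eqP; lia.
case: (eqVneq p k.+1) => [->|pk1]; first by rewrite eqxx.
by rewrite (negbTE pk) (negbTE pk1).
Qed.

Lemma swap_lt k n p : k.+1 < n -> p < n -> swap k p < n.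
Proof. by rewrite /swap; case: eqP => [->|_]; [|case: eqP => [->|_]]; lia. Qed.

Lemma shupK k : cancel (shup k) (shdn k).
Proof.
move=> p; rewrite /shup /shdn; case: (ltnP p k) => [->|h] //.
by rewrite ifF ?subn2 //; apply/negbTE; lia.
Qed.

Lemma shup_neq k p : (shup k p != k) && (shup k p != k.+1).
Proof. by rewrite /shup; case: (ltnP p k); lia. Qed.

Lemma shup_lt k n p : p < n -> shup k p < n.+2.
Proof. by rewrite /shup; case: (ltnP p k); lia. Qed.

Lemma nstrS F j : j < size F -> nstr F j.+1 = step (nstr F j) (ev F j).
Proof. by move=> lt_j; rewrite /nstr (take_nth (Cross 0) lt_j) -cats1 foldl_cat. Qed.

Section Mkseq.
Variable T : Type.
Implicit Types f g : nat -> T.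

Lemma eq_in_mkseq f g n : (forall p, p < n -> f p = g p) -> mkseq f n = mkseq g n.
Proof. by move=> fg; apply/eq_in_map => p; rewrite mem_iota add0n => /fg. Qed.

Lemma mkseqD f m n : mkseq f (m + n) = mkseq f m ++ mkseq (fun q => f (m + q)) n.
Proof. by rewrite /mkseq iotaD map_cat add0n -{2}[m]addn0 iotaDl -map_comp. Qed.

Lemma mkseq_swap f g n k : k.+1 < n -> (forall p, p < n -> g (swap k p) = f p) ->
  exists s1 s2, mkseq f n = s1 ++ [:: f k, f k.+1 & s2] /\
                mkseq g n = s1 ++ [:: f k.+1, f k & s2].
Proof.
move=> lt_k1n gf; have {}gf p : p < n -> g p = f (swap k p).
  by move=> lt_pn; rewrite -gf ?swapK // swap_lt.
have -> : n = k + (2 + (n - k.+2)) by lia.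
rewrite !mkseqD /= !addn0 !addn1.
exists (mkseq f k), (mkseq (fun q => f (k + (2 + q))) (n - k.+2)); split=> //.
congr (_ ++ [:: _, _ & _]).
- apply: eq_in_mkseq => p lt_pk; rewrite gf; last lia.
  by rewrite /swap !ifN //; lia.
- by rewrite gf ?(ltnW lt_k1n) // /swap eqxx.
- by rewrite gf // /swap ifN ?eqxx //; lia.
- apply: eq_in_mkseq => p lt_p; rewrite gf; last lia.
  by rewrite /swap !ifN //; lia.
Qed.

Lemma mkseq_shup f g n k : k <= n -> (forall p, p < n -> g (shup k p) = f p) ->
  exists s1 s2, mkseq f n = s1 ++ s2 /\ mkseq g n.+2 = s1 ++ [:: g k, g k.+1 & s2].
Proof.
move=> le_kn gf; rewrite (_ : n.+2 = k + (2 + (n - k))); last lia.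
rewrite {1}(_ : n = k + (n - k)); last lia.
rewrite !mkseqD /= !addn0 !addn1.
exists (mkseq f k), (mkseq (fun q => f (k + q)) (n - k)); split=> //.
congr (_ ++ [:: _, _ & _]); apply: eq_in_mkseq => p lt_p; rewrite -gf; try lia.
- by rewrite /shup lt_p.
- by rewrite /shup ifF ?addnS //; apply/negbTE; lia.
Qed.

End Mkseq.

Fixpoint inversions (s : seq bool) : nat :=
  if s is x :: s' then x * count negb s' + inversions s' else 0.

Lemma odd_inversions_pair s1 s2 b :
  odd (inversions (s1 ++ [:: b, b & s2])) = odd (inversions (s1 ++ s2)).
Proof.
elim: s1 => [|x s1 IH] /=; rewrite !(oddD, oddM) ?count_cat ?IH /= ?(oddD, oddM);
by case: (b) => /=; rewrite ?addKb ?negbK.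
Qed.

Lemma odd_inversions_swap s1 s2 x y :
  odd (inversions (s1 ++ [:: x, y & s2])) =
  (x != y) (+) odd (inversions (s1 ++ [:: y, x & s2])).
Proof.
elim: s1 => [|z s1 IH] /=; rewrite !(oddD, oddM) ?count_cat ?IH /= ?(oddD, oddM).
  move: (odd (count negb s2)) (odd (inversions s2)) => c i.
  by case: x; case: y; case: c; case: i.
move: (odd (count negb s1)) (odd (count negb s2)) (odd (inversions _)) => c1 c2 i.
by case: (x); case: (y); case: z; case: c1; case: c2; case: i.
Qed.

Lemma addb_neq x1 y1 x2 y2 : x1 != y1 -> x2 != y2 -> x1 (+) x2 = y1 (+) y2.
Proof. by case: x1; case: y1; case: x2; case: y2. Qed.

Definition orient_diff (a b : nat -> bool) (n : nat) : seq bool :=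
  mkseq (fun p => a p (+) b p) n.

Lemma odd_inversions_orient_step n e sw (a1 a2 b1 b2 : nat -> bool) :
  valid_event n e -> orient_step n e sw a1 b1 -> orient_step n e sw a2 b2 ->
  odd (inversions (orient_diff b1 b2 (step n e))) =
  odd (inversions (orient_diff a1 a2 n)) (+)
  (~~ sw && if e is Cross k then (a1 k == a1 k.+1) != (a2 k == a2 k.+1) else false).
Proof.
pose da p := a1 p (+) a2 p; pose db p := b1 p (+) b2 p.
rewrite /orient_diff -/da -/db.
case: e => k valid_k; rewrite /= in valid_k; last 2 first.
- case=> b1k ba1 [b2k ba2]; rewrite andbF addbF.
  have db_shup p : p < n -> db (shup k p) = da p by move=> lt_pn; rewrite /db ba1 ?ba2.
  have [s1 [s2 [-> ->]]] := mkseq_shup valid_k db_shup.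
  by rewrite /db (addb_neq b1k b2k) odd_inversions_pair.
- case=> a1k ba1 [a2k ba2]; rewrite andbF addbF.
  have da_shup q : q < n.-2 -> da (shup k q) = db q.
    move=> lt_q; have /andP[neq_k neq_k1] := shup_neq k q.
    have lt_n : shup k q < n by move: (shup_lt k lt_q); lia.
    by rewrite /da /db -ba1 // -ba2 // shupK.
  have le_k : k <= n.-2 by lia.
  have [s1 [s2 [-> eq_a]]] := mkseq_shup le_k da_shup.
  rewrite -[n in mkseq da n](_ : n.-2.+2 = n); last lia.
  by rewrite eq_a /da (addb_neq a1k a2k) odd_inversions_pair.
case: sw => /= ba1 ba2.
  by rewrite addbF (@eq_in_mkseq _ db da) // => p lt_pn; rewrite /db ba1 ?ba2.
have db_swap p : p < n -> db (swap k p) = da p by move=> lt_pn; rewrite /db ba1 ?ba2.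
have [s1 [s2 [-> ->]]] := mkseq_swap valid_k db_swap.
rewrite odd_inversions_swap addbC /da; congr addb.
by case: (a1 k); case: (a1 k.+1); case: (a2 k); case: (a2 k.+1).
Qed.

Definition sign_differs (F : front) (S : seq nat) (oa ob : nat -> nat -> bool)
  (j : nat) : bool :=
  (j \notin S) && if ev F j is Cross k then pos_at oa j k != pos_at ob j k else false.

Lemma sign_differs_even F S oa ob :
  valid_front F -> is_orientation_res F S oa -> is_orientation_res F S ob ->
  ~~ odd (count (sign_differs F S oa ob) (iota 0 (size F))).
Proof.
case=> valid_ev nstr_end oa_or ob_or.
have inv_slice j : j <= size F ->
    odd (inversions (orient_diff (oa j) (ob j) (nstr F j))) =
    odd (count (sign_differs F S oa ob) (iota 0 j)).
  elim: j => [|j IH] lt_j; first by rewrite /nstr take0.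
  rewrite nstrS // (odd_inversions_orient_step (valid_ev j lt_j) (oa_or j lt_j) (ob_or j lt_j)).
  by rewrite IH 1?ltnW // -addn1 iotaD count_cat oddD /= addn0 add0n oddb.
by rewrite -inv_slice // nstr_end.
Qed.

Lemma odd_count_addb (T : Type) (p q : pred T) s :
  odd (count p s) (+) odd (count q s) = odd (count (fun x => p x (+) q x) s).
Proof.
elim: s => [|x s IH] //=; rewrite !oddD -IH.
by case: (p x); case: (q x); case: (odd (count p s)); case: (odd (count q s)).
Qed.

Lemma count_sign_differs F S o r :
  count (sign_differs F S o r) (iota 0 (size F)) = f_plus F S o r + f_minus F S o r.
Proof.
rewrite /f_plus /f_minus /f_count /sign_differs.
elim: (iota _ _) => //= j s ->; case: (ev F j) => [k||] /=; rewrite ?andbF //.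
by case: (j \notin S); case: (pos_at o j k); case: (pos_at r j k) => //=; lia.
Qed.

Lemma e2_parity F S o r :
  e2 F S o r =
  (odd (s_minus F S o) (+) odd (count (sign_differs F S o r) (iota 0 (size F))) : nat).
Proof.
rewrite /e2 count_sign_differs.
set a := s_minus _ _ _; set b := f_plus _ _ _ _; set c := f_minus _ _ _ _.
have -> : (a%:Z + b%:Z - c%:Z = - c%:Z * 2 + (a + (b + c))%:Z)%R by rewrite !PoszD; lia.
by rewrite modzMDl modz_nat modn2 oddD.
Qed.

Theorem lemma3p2 (F : front) (S : seq nat) (o1 o2 orho1 orho2 : nat -> nat -> bool) :
  valid_front F -> normal_ruling F S ->
  is_orientation F o1 -> is_orientation F o2 ->
  is_orientation_res F S orho1 -> is_orientation_res F S orho2 ->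
  e2 F S o1 orho1 = e2 F S o2 orho2.
Proof.
move=> valid_F _ o1_or o2_or r1_or r2_or; rewrite !e2_parity.
have /negbTE even_o := sign_differs_even valid_F o1_or o2_or.
have /negbTE even_r := sign_differs_even valid_F r1_or r2_or.
set l := iota 0 (size F).
suff -> : odd (s_minus F S o1) (+) odd (count (sign_differs F S o1 orho1) l) =
  odd (s_minus F S o2) (+) odd (count (sign_differs F S o2 orho2) l) (+)
  (odd (count (sign_differs F [::] o1 o2) l) (+) odd (count (sign_differs F S orho1 orho2) l)).
  by rewrite even_o even_r !addbF.
rewrite /s_minus !odd_count_addb; congr odd; apply: eq_count => j.
rewrite /sign_differs in_nil /=; case: (ev F j) => k; rewrite ?andbF //.
(* At a switch the e_2 term changes iff the sign for o changes; elsewhere it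
   changes iff exactly one of the signs for o and for o^rho changes. *)
move: (j \in S) (pos_at o1 j k) (pos_at o2 j k) (pos_at orho1 j k) (pos_at orho2 j k).
by do 5!case.
Qed.
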